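(* Let $S$ be a square-free semigroup, $D$ a division ring, $(\alpha,\xi)\in Z^2(S,D^* )$ a normal 2-cocycle and $R=D^{\alpha}_{\xi}S$. Then the map $\Lambda: H^1_{(\alpha,\xi)}(S,D^* )\to\mathrm{Out}\,R$ given by $B^1_{(\alpha,\xi)}(S,D^* )\,(\mu,\eta)\mapsto(\mathrm{Inn}\,R)\,\sigma_{\mu\eta}$ for $(\mu,\eta)\in Z^1_{(\alpha,\xi)}(S,D^* )$ is a monomorphism (injective group homomorphism).
   Context: $D$ is a division ring, $D^*$ its group of units, $\mathrm{Aut}(D)$ its ring automorphism group, $\rho_d(x)=dxd^{-1}$, $1_D$ the identity of $\mathrm{Aut}(D)$. A square-free semigroup is a semigroup $S$ (product $s\cdot t$) with zero $\theta$ and a finite set $E\subseteq S$ of nonzero pairwise orthogonal idempotents with $S=\bigcup_{e,f\in E}e\cdot S\cdot f$ and $|e\cdot S\cdot f\setminus\{\theta\}|\le 1$; $S^*=S\setminus\{\theta\}$ and each $s\in S^*$ equals $e\cdot s\cdot f$ for unique $e,f\in E$. $S^{<0>}=E$, $S^{<n>}=\{(s_1,\dots,s_n)\in S^n:s_1\cdots s_n\ne\theta\}$, $F^n(S,G)$ the group of functions $S^{<n>}\to G$; $\alpha_s=\alpha(s)$, $\mu_e=\mu(e)$. A 2-cocycle is $(\alpha,\xi)\in F^1(S,\mathrm{Aut}(D))\times F^2(S,D^* )$ with $\alpha_s(\xi(t,u))\xi(s,t\cdot u)=\xi(s,t)\xi(s\cdot t,u)$ on $S^{<3>}$ and $\alpha_s\circ\alpha_t=\rho_{\xi(s,t)}\circ\alpha_{s\cdot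 t}$ on $S^{<2>}$; $Z^2(S,D^* )$ is their set; normal means $\alpha_e=1_D$, $\xi(e,e)=1$ for $e\in E$. $D^{\alpha}_{\xi}S$ is the ring which is the left $D$-vector space with basis $S^*$, multiplication extended by distributivity from $(d_1s)(d_2t)=d_1\alpha_s(d_2)\xi(s,t)(s\cdot t)$ if $s\cdot t\ne\theta$, $0$ otherwise. $\mathrm{Aut}\,R$ is the ring automorphism group, $\mathrm{Inn}\,R$ the normal subgroup of conjugations $x\mapsto rxr^{-1}$ by units $r$, $\mathrm{Out}\,R=\mathrm{Aut}\,R/\mathrm{Inn}\,R$. $Z^1_{(\alpha,\xi)}(S,D^* )$ is the subgroup of $F^0(S,\mathrm{Aut}(D))\ltimes F^1(S,D^* )$ of pairs $(\mu,\eta)$ with $\mu_e\circ\alpha_s\circ\mu_f^{-1}=\rho_{\eta(s)}\circ\alpha_s$ for all $s=e\cdot s\cdot f\in S^*$ and $\mu_e(\xi(s,t))=\eta(s)\alpha_s(\eta(t))\xi(s,t)\eta(s\cdot t)^{-1}$ for all $(s,t)\in S^{<2>}$ with $s=e\cdot s$. $B^1_{(\alpha,\xi)}(S,D^* )$ is the normal subgroup of $Z^1_{(\alpha,\xi)}(S,D^* )$ consisting of the pairs $(\mu,\eta)$ for which there is $\epsilon\in F^0(S,D^* )$ with $\mu_e=\rho_{\epsilon(e)}$ for all $e\in E$ and $\eta(s)=\epsilon(e)\alpha_s(\epsilon(f)^{-1})$ for all $s=e\cdot s\cdot f\in S^*$. $H^1_{(\alpha,\xi)}(S,D^* )=Z^1_{(\alpha,\xi)}(S,D^*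 )/B^1_{(\alpha,\xi)}(S,D^* )$. For $(\mu,\eta)\in Z^1_{(\alpha,\xi)}(S,D^* )$, $\sigma_{\mu\eta}:R\to R$ is the additive map with $\sigma_{\mu\eta}(ds)=\mu_e(d)\eta(s)s$ for $d\in D$, $s=e\cdot s\in S^*$; it is a ring automorphism of $R$. *)

From HB Require Import structures.
From mathcomp Require Import all_boot all_order all_algebra.
Set Implicit Arguments. Unset Strict Implicit. Unset Printing Implicit Defensive.
Import GRing.Theory.
Local Open Scope ring_scope.

Unset Implicit Arguments.
Section SF.
Variables (S : finType) (op : S -> S -> S) (th : S) (E : {set S}).

Definition square_free : Prop :=
  (forall s t u, op s (op t u) = op (op s t) u) /\
  [/\ (forall s, op th s = th /\ op s th = th),
      (forall e, e \in E -> e != th /\ op e e = e),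
      (forall e f, e \in E -> f \in E -> e != f -> op e f = th),
      (forall s, exists e f t, [/\ e \in E, f \in E & s = op (op e t) f]) &
      (forall e f, e \in E -> f \in E ->
         #|[set op (op e t) f | t in S] :\ th| <= 1)%N].

Definition Sstar := {s : S | s != th}.

Definition lidem (s : S) : S := odflt th [pick e in E | op e s == s].

End SF.
Arguments Sstar {S}.
Arguments lidem {S}.
Arguments square_free {S}.

Definition division_ring (D : unitRingType) : Prop :=
  forall x : D, x != 0 -> x \is a GRing.unit.

Definition ring_aut (D : unitRingType) (m : D -> D) : Prop :=
  [/\ bijective m, (forall x y, m (x + y) = m x + m y),
      (forall x y, m (x * y) = m x * m y) & m 1 = 1].

Definition rho (D : unitRingType) (d : D) : D -> D := fun x => d * x * d^-1.
Arguments ring_aut {D}.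
Arguments rho {D}.
Arguments division_ring : clear implicits.

Unset Implicit Arguments.
Section Cocycle.
Variables (S : finType) (op : S -> S -> S) (th : S) (E : {set S}).
Variables (D : unitRingType) (al : S -> D -> D) (xi : S -> S -> D).

(* (al, xi) in Z^2(S, D^* ): al on S^<1> = S^*, xi on S^<2> *)
Definition cocycle2 : Prop :=
  [/\ (forall s, s != th -> ring_aut (al s)),
      (forall s t, op s t != th -> xi s t != 0),
      (forall s t u, op (op s t) u != th ->
         al s (xi t u) * xi s (op t u) = xi s t * xi (op s t) u) &
      (forall s t, op s t != th ->
         forall x, al s (al t x) = rho (xi s t) (al (op s t) x))].

Definition normal_cocycle : Prop :=
  forall e, e \in E -> (forall x, al e x = x) /\ xi e e = 1.

(* elements: left D-linear combinations of the basis S^*, i.e. coefficient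
   functions S^* -> D *)
Definition Rcar := {ffun Sstar th -> D}.

Definition Rmul (x y : Rcar) : Rcar :=
  [ffun u : Sstar th => \sum_(s : Sstar th) \sum_(t : Sstar th |
        op (val s) (val t) == val u) x s * al (val s) (y t) * xi (val s) (val t)].

Definition Rone : Rcar := [ffun u : Sstar th => if val u \in E then 1 else 0].

Definition R_aut (phi : Rcar -> Rcar) : Prop :=
  [/\ bijective phi, (forall x y, phi (x + y) = phi x + phi y) &
      (forall x y, phi (Rmul x y) = Rmul (phi x) (phi y))].

Definition R_inner (c : Rcar -> Rcar) : Prop :=
  exists r r' : Rcar, [/\ Rmul r r' = Rone, Rmul r' r = Rone &
                          forall x, c x = Rmul (Rmul r x) r'].

(* an element (mu, eta) of F^0(S,Aut D) x| F^1(S,D^* ); mu is only relevant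
   on E and eta only on S^* *)
Definition Fpair := ((S -> D -> D) * (S -> D))%type.

Definition inZ1 (z : Fpair) : Prop :=
  let: (mu, eta) := z in
  [/\ (forall e, e \in E -> ring_aut (mu e)),
      (forall s, s != th -> eta s != 0),
      (* mu_e o al_s o mu_f^{-1} = rho_{eta s} o al_s, composed with mu_f *)
      (forall s e f, s != th -> e \in E -> f \in E -> op (op e s) f = s ->
         forall x, mu e (al s x) = rho (eta s) (al s (mu f x))) &
      (forall s t e, op s t != th -> e \in E -> op e s = s ->
         mu e (xi s t) = eta s * al s (eta t) * xi s t * (eta (op s t))^-1)].

Definition inB1 (z : Fpair) : Prop :=
  inZ1 z /\
  let: (mu, eta) := z in
  exists eps : S -> D,
    [/\ (forall e, e \in E -> eps e != 0),
        (forall e, e \in E -> forall x, mu e x = rho (eps e) x) &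
        (forall s e f, s != th -> e \in E -> f \in E -> op (op e s) f = s ->
           eta s = eps e * al s ((eps f)^-1))].

(* group law of the semidirect product, chosen so that
   sigma_{z z'} = sigma_z o sigma_{z'} *)
Definition mulZ (z z' : Fpair) : Fpair :=
  let: (mu, eta) := z in let: (mu', eta') := z' in
  (fun e x => mu e (mu' e x), fun s => mu (lidem op th E s) (eta' s) * eta s).

Definition eqF (z z' : Fpair) : Prop :=
  (forall e, e \in E -> forall x, z.1 e x = z'.1 e x) /\
  (forall s, s != th -> z.2 s = z'.2 s).

Definition inB1coset (z' z : Fpair) : Prop :=
  exists b, inB1 b /\ eqF z' (mulZ b z).

(* sigma_{mu eta}(d s) = mu_e(d) eta(s) s for s = e.s *)
Definition sigma (z : Fpair) (x : Rcar) : Rcar :=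
  [ffun u : Sstar th => z.1 (lidem op th E (val u)) (x u) * z.2 (val u)].

End Cocycle.
Arguments cocycle2 {S} op th {D} al xi.
Arguments normal_cocycle {S} E {D} al xi.
Arguments Rmul {S} op th {D} al xi.
Arguments Rone {S} th E {D}.
Arguments R_aut {S} op th {D} al xi.
Arguments R_inner {S} op th E {D} al xi.
Arguments inZ1 {S} op th E {D} al xi.
Arguments inB1 {S} op th E {D} al xi.
Arguments inB1coset {S} op th E {D} al xi.
Arguments mulZ {S} op th E {D}.
Arguments sigma {S} op th E {D}.
Arguments eqF {S} th E {D}.

From Pilot Require Import Defs.
From mathcomp Require Import all_boot all_order all_algebra.
Import GRing.Theory.
Set Implicit Arguments. Unset Strict Implicit.

Local Open Scope ring_scope.

(* Each [sigma z] rescales the coordinates of the basis [S^*] separately, and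
   the product on [F^0 x| F^1] is chosen so that [sigma (z z') = sigma z o sigma z'];
   so Lambda is a homomorphism with no inner correction at all.  A coboundary of
   [eps] acts as conjugation by the diagonal unit [sum_e eps(e) e], which makes
   Lambda well defined.  Conversely, if [sigma z' = c o sigma z] with [c]
   conjugation by [r], then [c] fixes every idempotent [e], because every [sigma]
   does.  The [u]-coordinate of [(r e) r^-1], for [u] in [S e], is
   [r_u al_u(r^-1_e)], since a product [s t = u] with [s] in [S e] forces
   [t = e]; so [r] vanishes off [E], i.e. [r = sum_e eps(e) e], and comparing
   coordinates on the monomials [d s] shows that [z'] is the coboundary of [eps]
   times [z]. *)

Section RingAut.
Variables (D : unitRingType) (m : D -> D).
Hypothesis Hm : ring_aut m.

Lemma raut_add x y : m (x + y) = m x + m y. Proof. by case: Hm. Qed.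
Lemma raut_mul x y : m (x * y) = m x * m y. Proof. by case: Hm. Qed.
Lemma raut1 : m 1 = 1. Proof. by case: Hm. Qed.
Lemma raut0 : m 0 = 0.
Proof. by apply: (@addrI _ (m 0)); rewrite -raut_add !addr0. Qed.
Lemma raut_inj : injective m. Proof. by case: Hm => /bij_inj. Qed.
Lemma raut_eq0 x : (m x == 0) = (x == 0).
Proof. by rewrite -{1}raut0 (inj_eq raut_inj). Qed.
Lemma raut_sum I (r : seq I) (P : pred I) (F : I -> D) :
  m (\sum_(i <- r | P i) F i) = \sum_(i <- r | P i) m (F i).
Proof. exact: (big_morph m raut_add raut0). Qed.

Lemma raut_unit x : x \is a GRing.unit -> m x \is a GRing.unit.
Proof.
by move=> Ux; apply/unitrP; exists (m x^-1); rewrite -!raut_mul mulVr ?mulrV ?raut1.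
Qed.
Lemma raut_inv x : x \is a GRing.unit -> m x^-1 = (m x)^-1.
Proof.
move=> Ux; apply: (mulrI (raut_unit Ux)).
by rewrite -raut_mul !mulrV ?raut1 ?raut_unit.
Qed.
End RingAut.

Lemma rho_aut (D : unitRingType) (d : D) : d \is a GRing.unit -> ring_aut (rho d).
Proof.
move=> Ud; split; rewrite /rho.
- exists (rho d^-1) => x; rewrite /rho invrK !mulrA.
    by rewrite mulVr // mul1r divrK.
  by rewrite mulrV // mul1r mulrK.
- by move=> x y; rewrite mulrDr mulrDl.
- by move=> x y; rewrite !mulrA mulrVK.
- by rewrite mulr1 mulrV.
Qed.

Section TwistedSemigroupRing.
Variables (S : finType) (op : S -> S -> S) (th : S) (E : {set S}).
Hypothesis HS : square_free op th E.

Local Notation lidem := (lidem op th E).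
Definition ridem (s : S) : S := odflt th [pick f in E | op s f == s].

Lemma opA s t u : op s (op t u) = op (op s t) u.
Proof. by case: HS. Qed.
Lemma op_thl s : op th s = th.
Proof. by case: HS => _ [/(_ s) []]. Qed.
Lemma op_thr s : op s th = th.
Proof. by case: HS => _ [/(_ s) []]. Qed.
Lemma idem_neq_th e : e \in E -> e != th.
Proof. by case: HS => _ [_ H _ _ _] /H []. Qed.
Lemma idem_op e : e \in E -> op e e = e.
Proof. by case: HS => _ [_ H _ _ _] /H []. Qed.
Lemma idem_orth e f : e \in E -> f \in E -> e != f -> op e f = th.
Proof. by case: HS => _ [_ _ H _ _]; apply: H. Qed.

Lemma neq_th_opl s t : op s t != th -> s != th.
Proof. by apply: contraNneq => ->; rewrite op_thl. Qed.
Lemma neq_th_opr s t : op s t != th -> t != th.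
Proof. by apply: contraNneq => ->; rewrite op_thr. Qed.

Lemma exists_idem_lr s :
  exists e f, [/\ e \in E, f \in E, op e s = s & op s f = s].
Proof.
case: HS => _ [_ _ _ H _]; have [e [f [t [He Hf ->]]]] := H s.
by exists e, f; rewrite -!opA idem_op // !opA idem_op.
Qed.

Lemma lidem_spec s : lidem s \in E /\ op (lidem s) s = s.
Proof.
rewrite /Defs.lidem; case: pickP => [e /andP [He /eqP] | H] //=.
have [e [_ [He _ Hes _]]] := exists_idem_lr s.
by move: (H e); rewrite He Hes eqxx.
Qed.

Lemma ridem_spec s : ridem s \in E /\ op s (ridem s) = s.
Proof.
rewrite /ridem; case: pickP => [f /andP [Hf /eqP] | H] //=.
have [_ [f [_ Hf _ Hsf]]] := exists_idem_lr s.
by move: (H f); rewrite Hf Hsf eqxx.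
Qed.

Lemma lidem_unique e s : e \in E -> op e s = s -> s != th -> lidem s = e.
Proof.
move=> He Hes Hs; have [Hl Hls] := lidem_spec s.
apply/eqP; apply: contraNT Hs => Hne.
have -> : s = op e (op (lidem s) s) by rewrite Hls Hes.
by rewrite opA (idem_orth He Hl) 1?eq_sym // op_thl.
Qed.

Lemma ridem_unique f s : f \in E -> op s f = s -> s != th -> ridem s = f.
Proof.
move=> Hf Hsf Hs; have [Hr Hsr] := ridem_spec s.
apply/eqP; apply: contraNT Hs => Hne.
have -> : s = op (op s (ridem s)) f by rewrite Hsr Hsf.
by rewrite -opA (idem_orth Hr Hf) // op_thr.
Qed.

Lemma lidem_ridem_sandwich e f s : e \in E -> f \in E -> s != th ->
  op (op e s) f = s -> lidem s = e /\ ridem s = f.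
Proof.
move=> He Hf Hs Hesf; split.
- by apply: lidem_unique => //; rewrite -Hesf !opA idem_op.
- by apply: ridem_unique => //; rewrite -Hesf -opA idem_op.
Qed.

Lemma lidem_id e : e \in E -> lidem e = e.
Proof. by move=> He; apply: lidem_unique; rewrite ?idem_op ?idem_neq_th. Qed.
Lemma ridem_id e : e \in E -> ridem e = e.
Proof. by move=> He; apply: ridem_unique; rewrite ?idem_op ?idem_neq_th. Qed.

Lemma lidem_op s t : op s t != th -> lidem (op s t) = lidem s.
Proof.
by move=> Hst; have [Hl Hls] := lidem_spec s; apply: lidem_unique; rewrite // opA Hls.
Qed.
Lemma ridem_op s t : op s t != th -> ridem (op s t) = ridem t.
Proof.
by move=> Hst; have [Hr Htr] := ridem_spec t; apply: ridem_unique; rewrite // -opA Htr.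
Qed.

Lemma ridem_lidem s t : op s t != th -> ridem s = lidem t.
Proof.
move=> Hst; have [Hr Hsr] := ridem_spec s; have [Hl Hlt] := lidem_spec t.
apply/eqP; apply: contraNT Hst => Hne.
have -> : op s t = op (op s (ridem s)) (op (lidem t) t) by rewrite Hsr Hlt.
by rewrite -opA (opA (ridem s)) (idem_orth Hr Hl) // op_thl op_thr.
Qed.

(* The only use of the bound [#|e S e :\ th| <= 1]. *)
Lemma idem_of_lidem_ridem u : u != th -> lidem u = ridem u -> u \in E.
Proof.
move=> Hu Hlr; have [He Heu] := lidem_spec u; have [_ Hue] := ridem_spec u.
rewrite -Hlr in Hue; set e := lidem u in He Heu Hue.
case: HS => _ [_ _ _ _ /(_ e e He He) /card_le1_eqP Hc].
suff -> : u = e by [].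
apply: Hc; rewrite !inE ?Hu ?idem_neq_th //=; apply/imsetP.
- by exists e; rewrite ?idem_op.
- by exists u; rewrite ?Heu ?Hue.
Qed.

Lemma eq_ridem_of_op s t : op s t != th -> ridem (op s t) = ridem s -> t = ridem s.
Proof.
move=> Hst Hr; have Ht := neq_th_opr Hst.
have HtE : t \in E.
  by apply: idem_of_lidem_ridem; rewrite // -(ridem_op Hst) Hr (ridem_lidem Hst).
by rewrite -{1}(ridem_id HtE) -(ridem_op Hst) Hr.
Qed.

Variable D : unitRingType.
Hypothesis HD : division_ring D.
Variables (al : S -> D -> D) (xi : S -> S -> D).
Hypothesis Hc : cocycle2 op th al xi.
Hypothesis Hn : normal_cocycle E al xi.

Local Notation Rc := (Rcar S th D).
Local Notation RM := (Rmul op th al xi).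
Local Notation sigma := (sigma op th E).
Local Notation inZ1 := (inZ1 op th E al xi).

Lemma al_aut s : s != th -> ring_aut (al s).
Proof. by case: Hc => H _ _ _; apply: H. Qed.
Lemma xi_neq0 s t : op s t != th -> xi s t != 0.
Proof. by case: Hc => _ H _ _; apply: H. Qed.
Lemma xi_cocycle s t u : op (op s t) u != th ->
  al s (xi t u) * xi s (op t u) = xi s t * xi (op s t) u.
Proof. by case: Hc => _ _ H _; apply: H. Qed.
Lemma al_al s t x : op s t != th -> al s (al t x) = rho (xi s t) (al (op s t) x).
Proof. by case: Hc => _ _ _ H /H. Qed.
Lemma al_idem e x : e \in E -> al e x = x.
Proof. by move=> /Hn [->]. Qed.
Lemma xi_idem e : e \in E -> xi e e = 1.
Proof. by move=> /Hn []. Qed.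

Lemma xi_lidem s : s != th -> xi (lidem s) s = 1.
Proof.
move=> Hs; have [He Hes] := lidem_spec s; set e := lidem s in He Hes *.
have Hx : xi e s * xi e s = 1 * xi e s.
  by have := @xi_cocycle e e s; rewrite idem_op // Hes al_idem // xi_idem // => ->.
by apply: (mulIr (HD (xi_neq0 _))) Hx; rewrite Hes.
Qed.

Lemma xi_ridem s : s != th -> xi s (ridem s) = 1.
Proof.
move=> Hs; have [Hf Hsf] := ridem_spec s; set f := ridem s in Hf Hsf *.
have Hx : 1 * xi s f = xi s f * xi s f.
  have := @xi_cocycle s f f; rewrite Hsf idem_op // Hsf xi_idem //.
  by rewrite (raut1 (al_aut Hs)) => ->.
by apply/esym; apply: (mulIr (HD (xi_neq0 _))) Hx; rewrite Hsf.
Qed.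

Definition diag (g : S -> D) : Rc :=
  [ffun u => if val u \in E then g (val u) else 0].
Definition delta (e : S) : Rc := diag (fun s => (s == e)%:R).
Definition mono (s : S) (d : D) : Rc := [ffun u => if val u == s then d else 0].
Definition coef (y : Rc) (s : S) : D :=
  if insub s : option (Sstar th) is Some u then y u else 0.

Lemma val_neq_th (u : Sstar th) : val u != th.
Proof. exact: (proj2_sig u). Qed.

Lemma coefE y u : coef y (val u) = y u.
Proof. by rewrite /coef valK. Qed.

Lemma Rmul_diagl g y u : RM (diag g) y u = g (lidem (val u)) * y u.
Proof.
have [He Hu] := lidem_spec (val u).
rewrite ffunE (bigD1 (Sub (lidem (val u)) (idem_neq_th He) : Sstar th)) //=.
rewrite [X in _ + X]big1 ?addr0; last first.
  move=> s Hs; rewrite ffunE; case: ifP => HsE; last first.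
    by rewrite big1 // => t _; rewrite !mul0r.
  rewrite big1 // => t /eqP Hst; case/eqP: Hs; apply/val_inj => /=.
  have Hne : op (val s) (val t) != th by rewrite Hst; exact: val_neq_th.
  by rewrite -Hst (lidem_op Hne) lidem_id.
rewrite (bigD1 u) ?Hu //= [X in _ + X]big1 ?addr0; last first.
  move=> t /andP [/eqP Ht Htu]; case/eqP: Htu; apply/val_inj => /=.
  have Hne : op (lidem (val u)) (val t) != th by rewrite Ht; exact: val_neq_th.
  have := ridem_lidem Hne; rewrite ridem_id // => Hl.
  by rewrite -[in RHS]Ht Hl; have [_ ->] := lidem_spec (val t).
by rewrite ffunE /= He al_idem // xi_lidem ?mulr1 ?val_neq_th.
Qed.

Lemma Rmul_diagr g y u : RM y (diag g) u = y u * al (val u) (g (ridem (val u))).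
Proof.
have [Hf Hu] := ridem_spec (val u).
rewrite ffunE (bigD1 u) //= [X in _ + X]big1 ?addr0; last first.
  move=> s Hs; rewrite big1 // => t /eqP Hst; rewrite ffunE.
  case: ifP => HtE; last by rewrite (raut0 (al_aut (val_neq_th s))) mulr0 mul0r.
  case/eqP: Hs; apply/val_inj => /=.
  have Hne : op (val s) (val t) != th by rewrite Hst; exact: val_neq_th.
  rewrite -Hst -(lidem_id HtE) -(ridem_lidem Hne).
  by have [_ ->] := ridem_spec (val s).
rewrite (bigD1 (Sub (ridem (val u)) (idem_neq_th Hf) : Sstar th)) ?Hu //=.
rewrite [X in _ + X]big1 ?addr0; last first.
  move=> t /andP [/eqP Ht Htu]; rewrite ffunE.
  case: ifP => HtE; last by rewrite (raut0 (al_aut (val_neq_th u))) mulr0 mul0r.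
  case/eqP: Htu; apply/val_inj => /=.
  have Hne : op (val u) (val t) != th by rewrite Ht; exact: val_neq_th.
  by apply: (eq_ridem_of_op Hne); rewrite Ht.
by rewrite ffunE /= Hf xi_ridem ?mulr1 ?val_neq_th.
Qed.

Lemma Rmul_ridem_supported (y w : Rc) (u : Sstar th) (f : S) :
  (forall v, y v != 0 -> ridem (val v) = f) -> ridem (val u) = f ->
  RM y w u = y u * al (val u) (coef w f).
Proof.
move=> Hy Hr; have [Hf Hu] := ridem_spec (val u); rewrite Hr in Hf Hu.
rewrite ffunE (bigD1 u) //= [X in _ + X]big1 ?addr0; last first.
  move=> s Hs; rewrite big1 // => t /eqP Hst.
  have [->|Hys] := eqVneq (y s) 0; first by rewrite !mul0r.
  case/eqP: Hs; apply/val_inj => /=.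
  have Hne : op (val s) (val t) != th by rewrite Hst; exact: val_neq_th.
  have Ht : val t = f.
    by rewrite -(Hy _ Hys); apply: (eq_ridem_of_op Hne); rewrite Hst Hr Hy.
  by rewrite -Hst Ht -(Hy _ Hys); have [_ ->] := ridem_spec (val s).
rewrite (bigD1 (Sub f (idem_neq_th Hf) : Sstar th)) ?Hu //=.
rewrite [X in _ + X]big1 ?addr0; last first.
  move=> t /andP [/eqP Ht Htu]; case/eqP: Htu; apply/val_inj => /=.
  have Hne : op (val u) (val t) != th by rewrite Ht; exact: val_neq_th.
  by rewrite -Hr; apply: (eq_ridem_of_op Hne); rewrite Ht.
have := xi_ridem (val_neq_th u); rewrite Hr => ->.
by rewrite mulr1 -[f in RHS]/(val (Sub f (idem_neq_th Hf) : Sstar th)) coefE.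
Qed.

Section OneCocycle.
Variables (mu : S -> D -> D) (eta : S -> D).
Hypothesis Hz : inZ1 (mu, eta).

Lemma mu_aut e : e \in E -> ring_aut (mu e).
Proof. by case: Hz => H _ _ _; apply: H. Qed.
Lemma mu_lidem_aut s : ring_aut (mu (lidem s)).
Proof. by apply: mu_aut; case: (lidem_spec s). Qed.
Lemma eta_neq0 s : s != th -> eta s != 0.
Proof. by case: Hz => _ H _ _; apply: H. Qed.

Lemma mu_lidem_al s x : s != th ->
  mu (lidem s) (al s x) = rho (eta s) (al s (mu (ridem s) x)).
Proof.
case: Hz => _ _ H _ Hs; have [Hl Hls] := lidem_spec s; have [Hr Hsr] := ridem_spec s.
by apply: H; rewrite // Hls.
Qed.

Lemma mu_lidem_xi s t : op s t != th ->
  mu (lidem s) (xi s t) = eta s * al s (eta t) * xi s t * (eta (op s t))^-1.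
Proof. by case: Hz => _ _ _ H Hst; have [Hl Hls] := lidem_spec s; apply: H. Qed.

Lemma eta_idem e : e \in E -> eta e = 1.
Proof.
move=> He; have Hee : op e e != th by rewrite idem_op // idem_neq_th.
have := mu_lidem_xi Hee; rewrite lidem_id // xi_idem // (raut1 (mu_aut He)).
by rewrite al_idem // mulr1 idem_op // mulrK // HD // eta_neq0 // idem_neq_th.
Qed.

Lemma sigma_add x y : sigma (mu, eta) (x + y) = sigma (mu, eta) x + sigma (mu, eta) y.
Proof. by apply/ffunP => u; rewrite !ffunE /= (raut_add (mu_lidem_aut _)) mulrDl. Qed.

Lemma sigma_mul x y :
  sigma (mu, eta) (RM x y) = RM (sigma (mu, eta) x) (sigma (mu, eta) y).
Proof.
apply/ffunP => u; rewrite !ffunE /= (raut_sum (mu_lidem_aut _)) mulr_suml.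
apply: eq_bigr => s _; rewrite (raut_sum (mu_lidem_aut _)) mulr_suml.
apply: eq_bigr => t /eqP Hst; rewrite !ffunE /= -Hst.
have Hne : op (val s) (val t) != th by rewrite Hst val_neq_th.
have Hs := neq_th_opl Hne; have Ha := al_aut Hs; have Hm := mu_lidem_aut (val s).
rewrite lidem_op // !(raut_mul Hm) mu_lidem_al // mu_lidem_xi // /rho.
rewrite (ridem_lidem Hne) (raut_mul Ha) !mulrA.
by rewrite (mulrVK (HD (eta_neq0 Hs))) (mulrVK (HD (eta_neq0 Hne))).
Qed.

Lemma sigma_inj : injective (sigma (mu, eta)).
Proof.
move=> x x' /ffunP H; apply/ffunP => u; move: (H u); rewrite !ffunE /=.
move/(mulIr (HD (eta_neq0 (val_neq_th u)))).
exact: (raut_inj (mu_lidem_aut (val u))).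
Qed.

Lemma sigma_surj y : exists x, sigma (mu, eta) x == y.
Proof.
have /fin_all_exists [x Hx] :
    forall u : Sstar th, exists d, mu (lidem (val u)) d = y u / eta (val u).
  move=> u; have [[g _ Hg] _ _ _] := mu_lidem_aut (val u).
  by exists (g (y u / eta (val u))).
exists (finfun x); apply/eqP/ffunP => u.
by rewrite !ffunE /= Hx (mulrVK (HD (eta_neq0 (val_neq_th u)))).
Qed.

Lemma sigma_aut : R_aut op th al xi (sigma (mu, eta)).
Proof.
split; [|exact: sigma_add|exact: sigma_mul].
exists (fun y => xchoose (sigma_surj y)) => [x|y].
  by apply: sigma_inj; apply/eqP/(xchooseP (sigma_surj _)).
exact/eqP/(xchooseP (sigma_surj y)).
Qed.

Lemma sigma_delta e : sigma (mu, eta) (delta e) = delta e.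
Proof.
apply/ffunP => u; rewrite !ffunE /=; case: ifP => HuE.
  rewrite lidem_id // eta_idem // mulr1.
  by case: eqP => _; rewrite ?raut1 ?raut0 //; apply: mu_aut.
by rewrite (raut0 (mu_lidem_aut _)) mul0r.
Qed.

Lemma sigma_mono u d :
  sigma (mu, eta) (mono (val u) d) u = mu (lidem (val u)) d * eta (val u).
Proof. by rewrite !ffunE eqxx. Qed.

End OneCocycle.

Lemma sigma_mulZ z z' x : inZ1 z ->
  sigma (mulZ op th E z z') x = sigma z (sigma z' x).
Proof.
case: z z' => mu eta [mu' eta'] Hz; apply/ffunP => u.
by rewrite !ffunE /= (raut_mul (mu_lidem_aut Hz _)) mulrA.
Qed.

Lemma Rone_diag : Rone th E = diag (fun=> 1).
Proof. by apply/ffunP => u; rewrite !ffunE. Qed.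

Lemma Rmul1r y : RM (Rone th E) y = y.
Proof. by apply/ffunP => u; rewrite Rone_diag Rmul_diagl mul1r. Qed.

Lemma Rmulr1 y : RM y (Rone th E) = y.
Proof.
by apply/ffunP => u; rewrite Rone_diag Rmul_diagr (raut1 (al_aut (val_neq_th u))) mulr1.
Qed.

Lemma R_inner_id : R_inner op th E al xi id.
Proof.
by exists (Rone th E), (Rone th E); split; rewrite ?Rmul1r // => x; rewrite Rmulr1 Rmul1r.
Qed.

Definition conj_diag (eps : S -> D) (y : Rc) : Rc :=
  RM (RM (diag eps) y) (diag (fun s => (eps s)^-1)).

Lemma conj_diagE eps y u : conj_diag eps y u =
  eps (lidem (val u)) * y u * al (val u) (eps (ridem (val u)))^-1.
Proof. by rewrite Rmul_diagr Rmul_diagl. Qed.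

Lemma R_inner_conj_diag eps : (forall e, e \in E -> eps e != 0) ->
  R_inner op th E al xi (conj_diag eps).
Proof.
move=> Heps; exists (diag eps), (diag (fun s => (eps s)^-1)).
split=> //; apply/ffunP => u; rewrite Rmul_diagl !ffunE; case: ifP => HuE.
- by rewrite lidem_id // mulrV // HD // Heps.
- by rewrite mulr0.
- by rewrite lidem_id // mulVr // HD // Heps.
- by rewrite mulr0.
Qed.

Section Coboundary.
Variable eps : S -> D.
Hypothesis Heps : forall e, e \in E -> eps e != 0.

Definition coboundary : Fpair S D :=
  (fun e => rho (eps e), fun s => eps (lidem s) * al s (eps (ridem s))^-1).

Lemma eps_lidem_unit s : eps (lidem s) \is a GRing.unit.
Proof. by apply/HD/Heps; case: (lidem_spec s). Qed.
Lemma eps_ridem_unit s : eps (ridem s) \is a GRing.unit.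
Proof. by apply/HD/Heps; case: (ridem_spec s). Qed.

Lemma coboundary_Z1 : inZ1 coboundary.
Proof.
have al_eps_unit s : s != th -> al s (eps (ridem s)) \is a GRing.unit.
  by move=> Hs; apply: (raut_unit (al_aut Hs)); apply: eps_ridem_unit.
split=> /=.
- by move=> e He; apply/rho_aut/HD/Heps.
- move=> s Hs; have U : eps (lidem s) * al s (eps (ridem s))^-1 \is a GRing.unit.
    by rewrite unitrMr ?eps_lidem_unit // (raut_unit (al_aut Hs)) // unitrV eps_ridem_unit.
  by apply: contraTneq U => ->; rewrite unitr0.
- move=> s e f Hs He Hf Hesf x.
  have [<- <-] := lidem_ridem_sandwich He Hf Hs Hesf; rewrite /rho.
  have Ha := al_aut Hs.
  rewrite (raut_inv Ha) ?eps_ridem_unit // invrM ?unitrV ?eps_lidem_unit ?al_eps_unit //.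
  rewrite invrK !(raut_mul Ha) (raut_inv Ha) ?eps_ridem_unit //.
  by rewrite !mulrA !(mulrVK (al_eps_unit _ Hs)).
- move=> s t e Hst He Hes.
  have Hs := neq_th_opl Hst; have Ha := al_aut Hs.
  rewrite -(lidem_unique He Hes Hs) lidem_op // ridem_op // -(ridem_lidem Hst).
  have UC : al (op s t) (eps (ridem t))^-1 \is a GRing.unit.
    by apply: (raut_unit (al_aut Hst)); rewrite unitrV eps_ridem_unit.
  rewrite (raut_mul Ha) al_al // (raut_inv Ha) ?eps_ridem_unit // invrM ?eps_lidem_unit //.
  by rewrite /rho !mulrA (mulrVK (al_eps_unit _ Hs)) (mulrVK (HD (xi_neq0 Hst))) (mulrK UC).
Qed.

Lemma coboundary_B1 : inB1 op th E al xi coboundary.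
Proof.
split; first exact: coboundary_Z1.
exists eps; split=> // s e f Hs He Hf Hesf /=.
by have [-> ->] := lidem_ridem_sandwich He Hf Hs Hesf.
Qed.

End Coboundary.

Lemma coset_conj_diag z z' : inZ1 z -> inZ1 z' ->
  inB1coset op th E al xi z' z <->
  exists2 eps, (forall e, e \in E -> eps e != 0) &
               forall x, sigma z' x = conj_diag eps (sigma z x).
Proof.
case: z z' => mu eta [mu' eta'] Hz Hz'; split.
- case=> [[mub etab]] [[_ [eps [Heps Hmu Heta]]] [/= Hq1 Hq2]].
  exists eps => // x; apply/ffunP => u; rewrite conj_diagE !ffunE /=.
  have [Hl Hlu] := lidem_spec (val u); have [Hr Hur] := ridem_spec (val u).
  have Hu := val_neq_th u.
  rewrite Hq1 // Hq2 //= !Hmu // (Heta (val u) (lidem (val u)) (ridem (val u))) ?Hlu ?Hur //.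
  by rewrite /rho !mulrA !(mulrVK (HD (Heps _ Hl))).
- case=> eps Heps Hx; exists (coboundary eps); split; first exact: coboundary_B1.
  have Hmono (u : Sstar th) d : mu' (lidem (val u)) d * eta' (val u) =
      eps (lidem (val u)) * (mu (lidem (val u)) d * eta (val u)) *
      al (val u) (eps (ridem (val u)))^-1.
    by have := Hx (mono (val u) d); move/ffunP/(_ u); rewrite conj_diagE !sigma_mono.
  split=> [e He x | s Hs] /=.
  + have := Hmono (Sub e (idem_neq_th He) : Sstar th) x.
    by rewrite /= lidem_id // ridem_id // (eta_idem Hz) // (eta_idem Hz') // !mulr1 al_idem.
  + have := Hmono (Sub s Hs : Sstar th) 1.
    rewrite /= (raut1 (mu_lidem_aut Hz _)) (raut1 (mu_lidem_aut Hz' _)) !mul1r => ->.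
    by rewrite /rho !mulrA (mulrVK (eps_lidem_unit Heps s)).
Qed.

Section InnerFixingIdempotents.
Variables r r' : Rc.
Hypothesis Hrr' : RM r r' = Rone th E.
Hypothesis Hfix : forall e, e \in E -> RM (RM r (delta e)) r' = delta e.

Lemma Rmul_delta e v : RM r (delta e) v = if ridem (val v) == e then r v else 0.
Proof.
rewrite Rmul_diagr; have Ha := al_aut (val_neq_th v).
by case: eqP => _; rewrite ?(raut1 Ha) ?(raut0 Ha) ?mulr1 ?mulr0.
Qed.

Lemma delta_ridem_coef u :
  delta (ridem (val u)) u = r u * al (val u) (coef r' (ridem (val u))).
Proof.
have [Hf _] := ridem_spec (val u).
rewrite -{1}(Hfix Hf) (@Rmul_ridem_supported _ _ _ (ridem (val u))) ?Rmul_delta ?eqxx //.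
by move=> v; rewrite Rmul_delta; case: ifP => [/eqP //|_]; rewrite eqxx.
Qed.

Lemma coef_mul_idem e : e \in E -> coef r e * coef r' e = 1.
Proof.
move=> He; pose u : Sstar th := Sub e (idem_neq_th He).
have -> : e = val u by [].
have := delta_ridem_coef u; rewrite (ridem_id He) (al_idem _ He) coefE ffunE.
by rewrite He eqxx => <-.
Qed.

Lemma coef_idem_neq0 e : e \in E -> coef r e != 0.
Proof.
move=> He; apply: contraTneq (oner_neq0 D) => H0.
by rewrite -(coef_mul_idem He) H0 mul0r eqxx.
Qed.

Lemma coef_off_idem u : val u \notin E -> r u = 0.
Proof.
move=> HuE; have [Hf _] := ridem_spec (val u); set f := ridem (val u) in Hf *.
have Hr'f : coef r' f != 0.
  by apply: contraTneq (oner_neq0 D) => H0; rewrite -(coef_mul_idem Hf) H0 mulr0 eqxx.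
have Ua : al (val u) (coef r' f) \is a GRing.unit.
  by apply/HD; rewrite raut_eq0 ?Hr'f //; apply: al_aut (val_neq_th u).
have := delta_ridem_coef u; rewrite ffunE (negbTE HuE) => /esym H0.
by rewrite -(mulrK Ua (r u)) H0 mul0r.
Qed.

Lemma diag_coef : r = diag (coef r).
Proof.
apply/ffunP => u; rewrite ffunE coefE; case: ifP => // /negbT.
exact: coef_off_idem.
Qed.

Lemma diag_coef_inv : r' = diag (fun s => (coef r s)^-1).
Proof.
apply/ffunP => u; have := congr1 (fun y : Rc => y u) Hrr'.
rewrite /= {1}diag_coef Rmul_diagl !ffunE.
have [Hl _] := lidem_spec (val u); have Ur := HD (coef_idem_neq0 Hl).
case: ifP => HuE H.
- by rewrite (lidem_id HuE) in Ur H; rewrite -(mulKr Ur (r' u)) H mulr1.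
- by rewrite -(mulKr Ur (r' u)) H mulr0.
Qed.

Lemma conj_by_coef y : RM (RM r y) r' = conj_diag (coef r) y.
Proof. by rewrite /conj_diag -diag_coef -diag_coef_inv. Qed.

End InnerFixingIdempotents.

Lemma inner_sigma_conj_diag z z' c : inZ1 z -> inZ1 z' -> R_inner op th E al xi c ->
  (forall x, sigma z' x = c (sigma z x)) ->
  exists2 eps, (forall e, e \in E -> eps e != 0) &
               forall x, sigma z' x = conj_diag eps (sigma z x).
Proof.
case: z z' => mu eta [mu' eta'] Hz Hz' [r [r' [Hrr' _ Hcr]]] Hx.
have Hfix e : e \in E -> RM (RM r (delta e)) r' = delta e.
  by move=> _; rewrite -Hcr -{1}(sigma_delta Hz e) -Hx sigma_delta.
exists (coef r) => [e|x]; first exact: coef_idem_neq0 Hfix e.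
by rewrite Hx Hcr (conj_by_coef Hrr' Hfix).
Qed.

Lemma coset_iff_inner z z' : inZ1 z -> inZ1 z' ->
  inB1coset op th E al xi z' z <->
  exists c, R_inner op th E al xi c /\ forall x, sigma z' x = c (sigma z x).
Proof.
move=> Hz Hz'; apply: (iff_trans (coset_conj_diag Hz Hz')); split.
- by case=> eps Heps Hx; exists (conj_diag eps); split; [apply: R_inner_conj_diag|].
- by case=> c [Hinn Hx]; apply: inner_sigma_conj_diag Hinn Hx.
Qed.

Lemma sigma_mulZ_inner z z' : inZ1 z ->
  exists c, R_inner op th E al xi c /\
    forall x, sigma (mulZ op th E z z') x = c (sigma z (sigma z' x)).
Proof. by move=> Hz; exists id; split=> [|x]; [apply: R_inner_id | apply: sigma_mulZ]. Qed.

End TwistedSemigroupRing.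

Theorem mainTheorem4 (S : finType) (op : S -> S -> S) (th : S) (E : {set S})
  (HS : square_free op th E)
  (D : unitRingType) (HD : division_ring D)
  (al : S -> D -> D) (xi : S -> S -> D)
  (Hc : cocycle2 op th al xi) (Hn : normal_cocycle E al xi) :
  (forall z, inZ1 op th E al xi z -> R_aut op th al xi (sigma op th E z)) /\
  (forall z z', inZ1 op th E al xi z -> inZ1 op th E al xi z' ->
     (inB1coset op th E al xi z' z <->
      exists c, R_inner op th E al xi c /\
                forall x, sigma op th E z' x = c (sigma op th E z x))) /\
  (forall z z', inZ1 op th E al xi z -> inZ1 op th E al xi z' ->
     exists c, R_inner op th E al xi c /\
       forall x, sigma op th E (mulZ op th E z z') x
                 = c (sigma op th E z (sigma op th E z' x))).
Proof.
split; [|split].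
- by case=> mu eta Hz; apply: sigma_aut.
- by move=> z z' Hz Hz'; apply: coset_iff_inner.
- by move=> z z' Hz _; apply: sigma_mulZ_inner.
Qed.
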